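(* Let $R$ be a ring, $\mathcal C$ a Cartier $R$-algebra and $\mathfrak a\subset R$ a $\mathcal C$-ideal. If $(R,\mathcal C)$ is purely $F$-regular along $\mathfrak a$, then $(R,\mathcal C)$ is $F$-pure, $\mathfrak a$ is a radical ideal, and the minimal primes of $\mathfrak a$ are pairwise coprime (i.e. any two distinct minimal primes $\mathfrak p_i,\mathfrak p_j$ satisfy $\mathfrak p_i+\mathfrak p_j=R$).
   Context: All rings are noetherian $F$-finite commutative $\mathbb F_p$-algebras. $F^e_*R$ is $R$ viewed as an $R$-module via the $e$-th Frobenius $r\mapsto r^{p^e}$, and $\mathcal C_{e,R}=\operatorname{Hom}_R(F^e_*R,R)$ ($\mathcal C_{0,R}=R$). The full Cartier algebra $\mathcal C_R=\bigoplus_{e\ge0}\mathcal C_{e,R}$ has product $\phi\cdot\phi'=\phi\circ F^e_*\phi'$ for $\phi\in\mathcal C_{e,R}$, $\phi'\in\mathcal C_{e',R}$. A Cartier $R$-algebra is a graded $R$-subalgebra $\mathcal C=\bigoplus_e\mathcal C_e\subseteq\mathcal C_R$; $\mathcal C_+=\bigoplus_{e>0}\mathcal C_e$. An ideal $\mathfrak b$ is a $\mathcal C$-ideal if $\phi(F^e_*\mathfrak b)\subseteq\mathfrak b$ for all $\phi\in\mathcal C_e$, all $e$. For an ideal $\mathfrak b$, $\mathcal C_+\mathfrak b$ is the ideal generated by all $\phi(F^e_*b)$ with $e>0$, $\phi\in\mathcal C_e$, $b\in\mathfrak b$. $(R,\mathcal C)$ is $F$-pure if $\mathcal C_+R=R$.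 A prime $\mathcal C$-ideal $\mathfrak p$ is a center of $F$-purity if $\mathcal C_+R\not\subseteq\mathfrak p$. $(R,\mathcal C)$ is non-degenerate along a $\mathcal C$-ideal $\mathfrak a$ if every minimal prime of $\mathfrak a$ is a center of $F$-purity, and purely $F$-regular along $\mathfrak a$ if it is non-degenerate along $\mathfrak a$ and every proper $\mathcal C$-ideal is contained in some minimal prime of $\mathfrak a$. *)

From HB Require Import structures.
From mathcomp Require Import all_boot all_order all_algebra.
Set Implicit Arguments. Unset Strict Implicit. Unset Printing Implicit Defensive.
Import GRing.Theory.
Local Open Scope ring_scope.

Section Cartier.
Variable R : comPzRingType.
Variable p : nat.

Definition is_ideal (I : R -> Prop) : Prop :=
  [/\ I 0, (forall x y, I x -> I y -> I (x + y)) & (forall r x, I x -> I (r * x))].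

Definition whole_ideal (I : R -> Prop) : Prop := forall x, I x.

Definition proper_ideal (I : R -> Prop) : Prop := is_ideal I /\ ~ I 1.

Definition subideal (I J : R -> Prop) : Prop := forall x, I x -> J x.

Definition same_ideal (I J : R -> Prop) : Prop := forall x, I x <-> J x.

Definition is_prime (P : R -> Prop) : Prop :=
  [/\ is_ideal P, ~ P 1 & (forall a b, P (a * b) -> P a \/ P b)].

Definition is_radical (I : R -> Prop) : Prop :=
  forall x n, I (x ^+ n) -> I x.

Definition minimal_prime_of (I P : R -> Prop) : Prop :=
  [/\ is_prime P, subideal I P &
      (forall Q, is_prime Q -> subideal I Q -> subideal Q P -> subideal P Q)].

Definition ideal_sum (I J : R -> Prop) : R -> Prop :=
  fun x => exists y z, [/\ I y, J z & x = y + z].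

Definition ideal_gen (S : R -> Prop) : R -> Prop :=
  fun x => forall J, is_ideal J -> subideal S J -> J x.

Definition Fp_algebra : Prop := prime p /\ (p%:R : R) = 0.

Definition noetherian : Prop :=
  forall I : nat -> R -> Prop,
    (forall n, is_ideal (I n)) -> (forall n, subideal (I n) (I n.+1)) ->
    exists N, forall n, (N <= n)%N -> subideal (I n) (I N).

(* F-finite: F_* R is a finitely generated R-module, where r acts on F_* R
   by multiplication by r^p. *)
Definition F_finite : Prop :=
  exists s : seq R, forall x, exists c : seq R,
    size c = size s /\ x = \sum_(i < size s) (c`_i) ^+ p * s`_i.

(* phi : F^e_* R -> R is R-linear: additive and phi (r^(p^e) x) = r phi(x). *)
Definition p_e_linear (e : nat) (phi : R -> R) : Prop :=
  (forall x y, phi (x + y) = phi x + phi y) /\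
  (forall r x, phi (r ^+ (p ^ e) * x) = r * phi x).

(* A Cartier R-algebra: a graded R-subalgebra C = (+)_e C_e of the full
   Cartier algebra; C e is the set of degree-e elements. Product of
   phi in C_e and phi' in C_e' is phi o phi' in C_(e+e'); C_0 = R acting
   by multiplication. *)
Definition cartier_algebra (C : nat -> (R -> R) -> Prop) : Prop :=
  [/\ (forall e phi, C e phi -> p_e_linear e phi),
      (forall r, C 0%N (fun x => r * x)),
      (forall e, C e (fun _ => 0)),
      (forall e phi psi, C e phi -> C e psi -> C e (fun x => phi x + psi x)) &
      (forall e e' phi psi, C e phi -> C e' psi -> C (e + e')%N (phi \o psi))].

Definition C_ideal (C : nat -> (R -> R) -> Prop) (b : R -> Prop) : Prop :=
  is_ideal b /\ (forall e phi x, C e phi -> b x -> b (phi x)).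

Definition Cplus (C : nat -> (R -> R) -> Prop) (b : R -> Prop) : R -> Prop :=
  ideal_gen (fun y => exists e phi x, [/\ (0 < e)%N, C e phi, b x & y = phi x]).

Definition F_pure (C : nat -> (R -> R) -> Prop) : Prop :=
  whole_ideal (Cplus C (fun _ => True)).

Definition center_of_F_purity (C : nat -> (R -> R) -> Prop) (P : R -> Prop) : Prop :=
  [/\ is_prime P, C_ideal C P & ~ subideal (Cplus C (fun _ => True)) P].

Definition non_degenerate_along (C : nat -> (R -> R) -> Prop) (a : R -> Prop) : Prop :=
  forall P, minimal_prime_of a P -> center_of_F_purity C P.

Definition purely_F_regular_along (C : nat -> (R -> R) -> Prop) (a : R -> Prop) : Prop :=
  non_degenerate_along C a /\
  (forall b, C_ideal C b -> proper_ideal b ->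
     exists P, minimal_prime_of a P /\ subideal b P).

End Cartier.

(* Both C_+ R and the sum P + Q of two minimal primes of a are C-ideals,
   the latter because centers of F-purity are C-ideals.  Pure F-regularity
   puts any proper C-ideal inside a minimal prime of a: for C_+ R this
   contradicts non-degeneracy, so (R, C) is F-pure; for P + Q it forces
   P = Q by minimality.  Finally, if x^(n+2) lies in a then for phi of degree
   e > 0 we have x^(n+1) phi(z) = phi(x^((n+1) p^e) z), which lies in a since
   (n+1) p^e >= n+2; so C_+ R = R lies in (a : x^(n+1)), i.e. x^(n+1) lies
   in a. *)
From mathcomp Require Import all_boot all_order all_algebra.
From Stdlib Require Import Classical.
Set Implicit Arguments. Unset Strict Implicit. Unset Printing Implicit Defensive.
Import GRing.Theory.
Local Open Scope ring_scope.

Section Ideals.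
Variable R : comPzRingType.
Implicit Types (I J S : R -> Prop) (x : R).

Lemma ideal_gen_ideal S : is_ideal (ideal_gen S).
Proof.
split=> [J [J0 _ _] _ //|x y Sx Sy J JI sSJ|r x Sx J JI sSJ].
- by case: (JI) => _ JD _; apply: JD; [apply: Sx | apply: Sy].
- by case: (JI) => _ _ JM; apply: JM; apply: Sx.
Qed.

Lemma sub_ideal_gen S : subideal S (ideal_gen S).
Proof. by move=> x Sx J _; apply. Qed.

Lemma whole_ideal1 I : is_ideal I -> I 1 -> whole_ideal I.
Proof. by move=> [_ _ IM] I1 x; rewrite -(mulr1 x); apply: IM. Qed.

Lemma ideal_sum_ideal I J : is_ideal I -> is_ideal J -> is_ideal (ideal_sum I J).
Proof.
move=> [I0 ID IM] [J0 JD JM]; split.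
- by exists 0, 0; rewrite addr0.
- move=> _ _ [y1 [z1 [Iy1 Jz1 ->]]] [y2 [z2 [Iy2 Jz2 ->]]].
  by exists (y1 + y2), (z1 + z2); rewrite addrACA; split; [apply: ID | apply: JD |].
- move=> r _ [y [z [Iy Jz ->]]].
  by exists (r * y), (r * z); rewrite mulrDr; split; [apply: IM | apply: JM |].
Qed.

Lemma subideal_suml I J : is_ideal J -> subideal I (ideal_sum I J).
Proof. by move=> [J0 _ _] x Ix; exists x, 0; rewrite addr0. Qed.

Lemma subideal_sumr I J : is_ideal I -> subideal J (ideal_sum I J).
Proof. by move=> [I0 _ _] x Jx; exists 0, x; rewrite add0r. Qed.

Definition ideal_colon I x : R -> Prop := fun y => I (x * y).

Lemma ideal_colon_ideal I x : is_ideal I -> is_ideal (ideal_colon I x).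
Proof.
rewrite /ideal_colon => -[I0 ID IM]; split=> [|y z Iy Iz|r y Iy].
- by rewrite mulr0.
- by rewrite mulrDr; apply: ID.
- by rewrite mulrCA; apply: IM.
Qed.

Lemma minimal_prime_sub_same I P M :
  minimal_prime_of I P -> minimal_prime_of I M -> subideal P M -> same_ideal P M.
Proof. by move=> [Pprime IP _] [_ _ Mmin] PM x; split; [exact: PM | exact: (Mmin P Pprime IP PM x)]. Qed.

End Ideals.

Section CartierIdeals.
Variables (R : comPzRingType) (p : nat) (C : nat -> (R -> R) -> Prop).
Hypothesis C_linear : forall e phi, C e phi -> p_e_linear p e phi.
Implicit Types (I J a : R -> Prop).

Let Cplus1 := Cplus C (fun _ : R => True).

Lemma C_ideal_Cplus1 : C_ideal C Cplus1.
Proof.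
have CI : is_ideal Cplus1 by apply: ideal_gen_ideal.
split=> // -[|e] phi x Ce Jx.
- have [_ phiZ] := C_linear Ce.
  have -> : phi x = x * phi 1 by rewrite -phiZ expn0 expr1 mulr1.
  by rewrite mulrC; case: CI => _ _; apply.
- by apply: sub_ideal_gen; exists e.+1, phi, x.
Qed.

Lemma C_ideal_sum I J : C_ideal C I -> C_ideal C J -> C_ideal C (ideal_sum I J).
Proof.
move=> [II IC] [JI JC]; split; first exact: ideal_sum_ideal.
move=> e phi _ Ce [y [z [Iy Jz ->]]]; have [phiD _] := C_linear Ce.
by exists (phi y), (phi z); rewrite phiD; split; [apply: (IC e) | apply: (JC e) |].
Qed.

Hypothesis p_gt1 : (1 < p)%N.

Lemma Cplus1_sub_colon a x n :
  C_ideal C a -> a (x ^+ n.+2) -> subideal Cplus1 (ideal_colon a (x ^+ n.+1)).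
Proof.
move=> [aI aC] axn y Jy; apply: Jy => [|_ [e [phi [z [e_gt0 Ce _ ->]]]]].
  exact: ideal_colon_ideal.
have [_ phiZ] := C_linear Ce; rewrite /ideal_colon -phiZ; apply: (aC e) => //.
have le_exp : (n.+2 <= n.+1 * p ^ e)%N.
  have : (n.+1 * 2 <= n.+1 * p ^ e)%N.
    rewrite leq_mul2l; apply: leq_trans (_ : p <= _)%N => //.
    by rewrite -{1}(expn1 p) leq_pexp2l // ltnW.
  by apply: leq_trans; rewrite muln2 -addnn addSn addnS !ltnS leq_addl.
rewrite -exprM -(subnKC le_exp) exprD -mulrA mulrC.
by case: aI => _ _; apply.
Qed.

Lemma F_pure_C_ideal_radical a : F_pure C -> C_ideal C a -> is_radical a.
Proof.
move=> FP aC x n; elim: n => [|[|n] IH axn].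
- by rewrite expr0 -(mulr1 x); case: aC => -[_ _ aM] _; apply: aM.
- by rewrite expr1 in axn.
- by apply: IH; rewrite -[x ^+ n.+1]mulr1; apply: (Cplus1_sub_colon aC axn) (FP 1).
Qed.

Section PurelyFRegular.
Variable a : R -> Prop.
Hypothesis pFr : purely_F_regular_along C a.

Lemma purely_F_regular_F_pure : F_pure C.
Proof.
have [CI _] := C_ideal_Cplus1.
apply: whole_ideal1 => //; apply: NNPP => notJ1.
have [P [aP JP]] := pFr.2 _ C_ideal_Cplus1 (conj CI notJ1).
by have [_ _] := pFr.1 P aP; apply.
Qed.

Lemma purely_F_regular_minimal_primes_coprime P Q :
  minimal_prime_of a P -> minimal_prime_of a Q -> ~ same_ideal P Q ->
  whole_ideal (ideal_sum P Q).
Proof.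
move=> aP aQ neqPQ.
have [[PI _ _] PC _] := pFr.1 P aP; have [[QI _ _] QC _] := pFr.1 Q aQ.
have [SI _] := C_ideal_sum PC QC.
apply: whole_ideal1 => //; apply: NNPP => notS1.
have [M [aM SM]] := pFr.2 _ (C_ideal_sum PC QC) (conj SI notS1).
have PM := minimal_prime_sub_same aP aM (fun x Px => SM x (subideal_suml QI Px)).
have QM := minimal_prime_sub_same aQ aM (fun x Qx => SM x (subideal_sumr PI Qx)).
by apply: neqPQ => x; rewrite PM QM.
Qed.

End PurelyFRegular.
End CartierIdeals.

(* Noetherianity and F-finiteness are standing assumptions of the paper that
   this argument does not use. *)
Theorem proposition2p8 (R : comPzRingType) (p : nat)
    (C : nat -> (R -> R) -> Prop) (a : R -> Prop) :
  Fp_algebra R p -> noetherian R -> F_finite R p ->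
  cartier_algebra p C -> C_ideal C a ->
  purely_F_regular_along C a ->
  [/\ F_pure C, is_radical a &
      (forall P Q, minimal_prime_of a P -> minimal_prime_of a Q ->
         ~ same_ideal P Q -> whole_ideal (ideal_sum P Q))].
Proof.
move=> [p_prime _] _ _ [C_linear _ _ _ _] aC pFr.
have FP := purely_F_regular_F_pure C_linear pFr.
split=> //.
- exact: (F_pure_C_ideal_radical C_linear (prime_gt1 p_prime) FP aC).
- exact: (purely_F_regular_minimal_primes_coprime C_linear pFr).
Qed.
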